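(* Let $r_0,\overline{r_0},l_0\in\mathbb N$, let $G_0\in\mathcal C_{V_0,2l_0}$ and $\overline{G_0}\in\mathcal C_{\overline V_0,2l_0}$ be circuit multigraphs without balanced leaves on finite vertex sets $V_0,\overline V_0\subset\mathbb N$ with $\#V_0=r_0$, $\#\overline V_0=\overline{r_0}$, and let $V'\subset\mathbb N$ be a finite set with $l':=\#V'$, disjoint from $V_0$ and $\overline V_0$. Assume that if $l_0=1$ and $G_0$ has a route $(v_i,v_j)$ with $v_i\ne v_j$, then $v_i,v_j$ are larger than all elements of $V'$, and likewise for $\overline{G_0}$. Then for every $B\subset V'$, $$\#\{G\in\mathcal C_{V_0\sqcup V',2l_0+2l'}\mid \operatorname S(G)=G_0,\ B(G)\cap V'=B\}=\#\{G\in\mathcal C_{\overline V_0\sqcup V',2l_0+2l'}\mid \operatorname S(G)=\overline{G_0},\ B(G)\cap V'=B\}.$$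
   Context: Vertices are positive integers with their natural order. For a finite $V\subset\mathbb N$ and $N\ge1$, a route through $V$ of length $N$ is a sequence $\mathbf i=(i_1,\dots,i_N)\in V^N$ whose set of entries equals $V$; its circuit multigraph $G_{\mathbf i}$ has vertex set $V$ and edges $1,\dots,N$ (own identity), edge $k<N$ from $i_k$ to $i_{k+1}$, edge $N$ from $i_N$ to $i_1$; $\mathcal C_{V,N}$ is the set of these, identified with their routes. Black vertices: $B(G_{\mathbf i})=\{i_t:t\text{ odd}\}$. Balanced leaf (only when $N>2$): a vertex $v$ occurring exactly once in $\mathbf i$, say $i_t=v$, with equal cyclic neighbours $i_{t-1}=i_{t+1}$ (indices mod $N$). Removing $v=i_t$: delete positions $t,t+1$ if $t<N$, positions $N-1,N$ if $t=N$. Seed graph: $\operatorname S(G)=G$ if $G$ has no balanced leaf, otherwise $\operatorname S(G)=\operatorname S(\widetilde G)$ with $\widetilde G$ being $G$ with its smallest balanced leaf removed. *)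

From mathcomp Require Import all_boot.
From mathcomp Require Import finmap.
Set Implicit Arguments. Unset Strict Implicit. Unset Printing Implicit Defensive.
Local Open Scope fset_scope.

(* Routes are sequences of vertices (positions are 0-indexed here: the
   paper's position t corresponds to index t-1). *)

Fixpoint all_seqs (V : seq nat) (N : nat) : seq (seq nat) :=
  match N with
  | 0 => [:: [::]]
  | N'.+1 => [seq x :: s | x <- V, s <- all_seqs V N']
  end.

Definition is_route (V : {fset nat}) (N : nat) (s : seq nat) : bool :=
  [&& size s == N, all (fun x => x \in V) s & all (fun v => v \in s) V].

(* C_{V,N}, as the list of routes (each circuit multigraph identified with its route) *)
Definition circuits (V : {fset nat}) (N : nat) : seq (seq nat) :=
  [seq s <- all_seqs V N | is_route V N s].

(* black vertices: entries at odd (1-indexed) positions = even 0-indexed positions *)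
Definition black (s : seq nat) : {fset nat} :=
  [fset nth 0 s t | t in iota 0 (size s) & ~~ odd t].

Definition is_bleaf (s : seq nat) (v : nat) : bool :=
  let N := size s in
  let t := index v s in
  [&& 2 < N, count_mem v s == 1 &
      nth 0 s ((t + N - 1) %% N) == nth 0 s ((t + 1) %% N)].

Definition has_bleaf (s : seq nat) : bool := has (is_bleaf s) s.

Definition remove_at (t : nat) (s : seq nat) : seq nat :=
  if t.+1 < size s then take t s ++ drop t.+2 s
  else take (size s - 2) s.

Definition min_bleaf (s : seq nat) : option nat :=
  match [seq v <- s | is_bleaf s v] with
  | [::] => None
  | v :: l => Some (foldr minn v l)
  end.

Fixpoint seed_rec (k : nat) (s : seq nat) : seq nat :=
  match k with
  | 0 => s
  | k'.+1 => match min_bleaf s with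
             | None => s
             | Some v => seed_rec k' (remove_at (index v s) s)
             end
  end.

(* S(G); fuel size s suffices since each removal shortens the route by 2 *)
Definition seed (s : seq nat) : seq nat := seed_rec (size s) s.

Definition count_seeded (V : {fset nat}) (N : nat) (G0 : seq nat)
    (V' B : {fset nat}) : nat :=
  size [seq G <- circuits V N | (seed G == G0) && (black G `&` V' == B)].

From mathcomp Require Import all_boot finmap zify.
Set Implicit Arguments. Unset Strict Implicit. Unset Printing Implicit Defensive.

(* If S(G) = G0, then G arises from G0 by inserting vertices of V' one at a
   time as balanced leaves.  Replaying the same insertions, at the same
   positions, on top of G0bar yields a route H with S(H) = G0bar whose
   V'-vertices occupy exactly the positions they have in G, so B(H) and B(G)
   agree on V'; replaying backwards inverts the map, which gives both
   inequalities between the counts.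
   The replay is faithful because S removes the same vertex from G and from H
   at every step.  A V'-vertex is a balanced leaf of G iff it is one of H,
   since in both routes every V'-vertex between two non-V' vertices has equal
   neighbours.  A balanced leaf of H outside V' would be a leaf of G0bar,
   which has none, except when G0bar = (a, b) with a, b above every vertex of
   V', and then it is never the smallest balanced leaf. *)

Section SeqRot.
Variables T U : Type.
Implicit Types (s : seq T) (u : seq U).

Lemma take_zip k s u : take k (zip s u) = zip (take k s) (take k u).
Proof.
elim: k s u => [|k IH] s u; first by rewrite !take0.
by case: s => [|x s]; case: u => [|y u] //=; rewrite IH.
Qed.

Lemma drop_zip k s u : drop k (zip s u) = zip (drop k s) (drop k u).
Proof.
elim: k s u => [|k IH] s u; first by rewrite !drop0.
case: s => [|x s]; case: u => [|y u] //=.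
- by case: (drop k u).
- by case: (drop k s).
Qed.

Lemma rot_zip k s u : size s = size u -> rot k (zip s u) = zip (rot k s) (rot k u).
Proof. by move=> eq_su; rewrite /rot drop_zip take_zip zip_cat // !size_drop eq_su. Qed.

Lemma count_rot (a : pred T) k s : count a (rot k s) = count a s.
Proof. by rewrite /rot count_cat addnC -count_cat cat_take_drop. Qed.

Variable x0 : T.

Lemma nth_map_dflt (f : T -> U) s i : nth (f x0) (map f s) i = f (nth x0 s i).
Proof.
case: (ltnP i (size s)) => [lt_i|le_i]; first by rewrite (nth_map x0).
by rewrite !nth_default ?size_map.
Qed.

Lemma nth_rot1 s p : p < size s -> nth x0 (rot 1 s) p = nth x0 s ((p + 1) %% size s).
Proof.
case: s => [|x s] //= lt_p; rewrite rot1_cons nth_rcons.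
case: (ltngtP p (size s)) => [lt_ps|gt_ps|->]; last by rewrite addn1 modnn.
- by rewrite modn_small ?addn1.
- by lia.
Qed.

Lemma nth_rotr1 s p : p < size s ->
  nth x0 (rotr 1 s) p = nth x0 s ((p + size s - 1) %% size s).
Proof.
case/lastP: s => [|s x] //; rewrite size_rcons rotr1_rcons => lt_p.
case: p lt_p => [|p] lt_p /=.
  by rewrite add0n subn1 modn_small // nth_rcons ltnn eqxx.
have -> : p.+1 + (size s).+1 - 1 = p + (size s).+1 by lia.
by rewrite modnDr modn_small 1?ltnW // nth_rcons -ltnS lt_p.
Qed.

Lemma last_rot k s : 0 < size s -> k <= size s ->
  last x0 (rot k s) = nth x0 s ((k + size s - 1) %% size s).
Proof.
move=> s_gt0; case: k => [|k] le_ks.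
  by rewrite rot0 add0n subn1 modn_small ?prednK // -nth_last.
rewrite /rot last_cat (take_nth x0) // last_rcons.
have -> : k.+1 + size s - 1 = k + size s by lia.
by rewrite modnDr modn_small.
Qed.
End SeqRot.

Definition windows (s : seq nat) := zip (rotr 1 s) (zip s (rot 1 s)).

Lemma windows_rot k s : windows (rot k s) = rot k (windows s).
Proof.
by rewrite /windows -rot_rotr rot_rot !rot_zip ?size_zip ?size_rot ?size_rotr ?minnn.
Qed.

Lemma mem_windows_rot k s : windows (rot k s) =i windows s.
Proof. by move=> x; rewrite windows_rot mem_rot. Qed.

Lemma size_windows s : size (windows s) = size s.
Proof. by rewrite /windows !size_zip size_rot size_rotr !minnn. Qed.

Lemma nth_windows s p : p < size s ->
  nth (0, (0, 0)) (windows s) p =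
  (nth 0 s ((p + size s - 1) %% size s), (nth 0 s p, nth 0 s ((p + 1) %% size s))).
Proof.
move=> lt_p; rewrite /windows !nth_zip ?size_zip ?size_rot ?size_rotr ?minnn //.
by rewrite nth_rot1 // nth_rotr1.
Qed.

Lemma windowsP s x :
  reflect (exists2 p, p < size s & x = nth (0, (0, 0)) (windows s) p) (x \in windows s).
Proof.
apply: (iffP (nthP (0, (0, 0)))) => [] [p]; rewrite size_windows => lt_p eq_x.
all: by exists p.
Qed.

Lemma mem_windows_center s x : x \in windows s -> x.2.1 \in s.
Proof. by case/windowsP=> p lt_p ->; rewrite nth_windows //= mem_nth. Qed.

(* The windows of [z :: Z] when the successor of its last vertex is [c]
   instead of [z]. *)
Definition open_windows (z : nat) Z c :=
  zip (last z Z :: belast z Z) (zip (z :: Z) (rcons Z c)).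

Lemma windows_cons z Z : windows (z :: Z) = open_windows z Z z.
Proof. by rewrite /windows rot1_cons [in rotr _ _]lastI rotr1_rcons. Qed.

Lemma windows_splice v z Z :
  windows [:: v, last z Z, z & Z] =
  [:: (last z Z, (v, last z Z)), (v, (last z Z, z)) & open_windows z Z v].
Proof.
set u := last z Z.
have -> : v :: u :: z :: Z = rcons (v :: u :: belast z Z) u by rewrite /= -lastI.
by rewrite /windows rotr1_rcons rot1_cons /= -/(rcons _ _) -lastI.
Qed.

Lemma mem_zip_rcons2 (L1 L2 S : seq nat) c c' x :
  size L1 = (size S).+1 -> size L2 = (size S).+1 ->
  x \in zip L1 (zip L2 (rcons S c)) ->
  x \in zip L1 (zip L2 (rcons S c')) \/ x.2.1 = last 0 L2 /\ x.2.2 = c.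
Proof.
case/lastP: L1 => [|L1 a] //; case/lastP: L2 => [|L2 b] //.
rewrite !size_rcons => -[sz1] [sz2].
rewrite !zip_rcons ?size_zip ?size_rcons ?sz1 ?sz2 ?minnn // !mem_rcons !inE.
by rewrite last_rcons => /orP [/eqP ->|->]; [right | left; rewrite orbT].
Qed.

Lemma mem_open_windows z Z c c' x : x \in open_windows z Z c ->
  x \in open_windows z Z c' \/ x.2.1 = last z Z /\ x.2.2 = c.
Proof. by apply: mem_zip_rcons2; rewrite /= ?size_belast. Qed.

Definition weak_bleaf (s : seq nat) (w : nat) :=
  count_mem w s = 1 /\ forall x, x \in windows s -> x.2.1 = w -> x.1 = x.2.2.

Lemma count_mem1 (s : seq nat) w : count_mem w s = 1 -> w \in s.
Proof. by move=> cnt1; rewrite -has_pred1 has_count cnt1. Qed.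

Lemma index_count_mem1 (s : seq nat) w p : count_mem w s = 1 -> p < size s ->
  nth 0 s p = w -> index w s = p.
Proof.
move=> cnt1 lt_p nth_p.
have def_s : s = take p s ++ w :: drop p.+1 s by rewrite -nth_p -drop_nth ?cat_take_drop.
have w_take : w \notin take p s.
  apply/negP; rewrite -has_pred1 has_count => w_in.
  move: cnt1; rewrite def_s count_cat /= eqxx add1n.
  by move: w_in; set c := count _ (take p s); lia.
by rewrite {1}def_s index_cat (negbTE w_take) /= eqxx addn0 size_takel // ltnW.
Qed.

Lemma bleafP (s : seq nat) w : is_bleaf s w <-> 2 < size s /\ weak_bleaf s w.
Proof.
rewrite /is_bleaf; split.
  case/and3P=> s_gt2 /eqP cnt1 /eqP nbr_eq; do 2!split=> //.
  case=> a [b c] /windowsP [p lt_p]; rewrite nth_windows // => -[-> -> ->] /= nth_p.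
  by rewrite -(index_count_mem1 cnt1 lt_p nth_p).
case=> -> [cnt1 nbr_eq]; rewrite cnt1 eqxx /=; apply/eqP.
have lt_i : index w s < size s by rewrite index_mem count_mem1.
have x_in : nth (0, (0, 0)) (windows s) (index w s) \in windows s.
  by rewrite mem_nth ?size_windows.
by have := nbr_eq _ x_in; rewrite nth_windows //= nth_index ?count_mem1 //; apply.
Qed.

Lemma weak_bleaf_rot k s w : weak_bleaf (rot k s) w <-> weak_bleaf s w.
Proof.
rewrite /weak_bleaf count_rot.
split=> -[-> nbr_eq]; split=> // x x_in; apply: nbr_eq.
  by rewrite mem_windows_rot.
by rewrite -(mem_windows_rot k).
Qed.

Section Balanced.
Variable P : pred nat.

Definition balanced_on (s : seq nat) :=
  forall x, x \in windows s -> P x.2.1 -> ~~ P x.1 -> ~~ P x.2.2 -> x.1 = x.2.2.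

Lemma balanced_on_rot k s : balanced_on (rot k s) <-> balanced_on s.
Proof.
split=> bal x x_in; apply: bal.
  by rewrite mem_windows_rot.
by rewrite -(mem_windows_rot k).
Qed.

Lemma balanced_on_notP s : all (predC P) s -> balanced_on s.
Proof. by move=> /allP notP x /mem_windows_center/notP /negP. Qed.

Lemma balanced_on_splice v z Z : P v ->
  balanced_on (z :: Z) -> balanced_on [:: v, last z Z, z & Z].
Proof.
move=> Pv bal x; rewrite windows_splice !inE => /or3P [/eqP -> | /eqP -> | ] //=.
- by rewrite Pv.
- case/(mem_open_windows z) => [x_in|[_ ->]]; last by rewrite Pv.
  by apply: bal; rewrite windows_cons.
Qed.

Lemma weak_bleaf_splice v z Z w : P v -> ~~ P w ->
  weak_bleaf [:: v, last z Z, z & Z] w -> weak_bleaf (z :: Z) w.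
Proof.
move=> Pv notPw [cnt1 nbr_eq].
have neq_vw : v != w by apply: contraNneq notPw => <-.
have neq_uw : last z Z != w.
  apply: contra_eqN cnt1 => /eqP eq_uw; rewrite /= (negbTE neq_vw) eq_uw eqxx.
  have : w \in z :: Z by rewrite -eq_uw mem_last.
  by rewrite -has_pred1 has_count /=; lia.
split; first by move: cnt1; rewrite /= (negbTE neq_vw) (negbTE neq_uw).
move=> x; rewrite windows_cons => /(@mem_open_windows _ _ _ v) [x_in|[-> _]] x_w.
  by apply: nbr_eq x_w; rewrite windows_splice !inE x_in !orbT.
by rewrite x_w eqxx in neq_uw.
Qed.
End Balanced.

(* Reinserts [v] at position [t] as a balanced leaf hanging off its cyclic
   predecessor; for [t = size s + 1] the leaf closes the route. *)
Definition insert_at (T : Type) (x0 : T) (t : nat) (v : T) (s : seq T) : seq T :=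
  let n := size s in
  if t <= n then take t s ++ v :: nth x0 s ((t + n - 1) %% n) :: drop t s
  else s ++ [:: nth x0 s 0; v].

Lemma map_insert_at (T U : Type) (f : T -> U) x0 t v s :
  map f (insert_at x0 t v s) = insert_at (f x0) t (f v) (map f s).
Proof.
rewrite /insert_at size_map; case: ifP => _; rewrite map_cat /= ?map_take ?map_drop.
all: by rewrite !nth_map_dflt.
Qed.

Lemma size_insert_at t v (s : seq nat) : t <= (size s).+1 ->
  size (insert_at 0 t v s) = (size s).+2.
Proof.
rewrite /insert_at; case: ifP => le_t _; rewrite size_cat /= ?addn2 //.
by rewrite size_take size_drop; case: ltnP; lia.
Qed.

Lemma remove_insert_at t v (s : seq nat) : t <= (size s).+1 ->
  remove_at t (insert_at 0 t v s) = s.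
Proof.
move=> le_t; rewrite /remove_at size_insert_at // /insert_at.
case: (leqP t (size s)) => [le_ts|gt_ts]; last first.
  have -> : t = (size s).+1 by lia.
  by rewrite ltnn subn2 take_size_cat.
have -> : t.+1 < (size s).+2 by lia.
rewrite take_cat drop_cat size_takel // ltnn subnn take0 cats0.
have -> : (t.+2 < t) = false by lia.
by rewrite subSn // subSn // subnn /= drop0 cat_take_drop.
Qed.

Lemma insert_atE_rot t v (s : seq nat) : 0 < size s -> t <= (size s).+1 ->
  exists k j, insert_at 0 t v s = rot k [:: v, last 0 (rot j s) & rot j s].
Proof.
move=> s_gt0 le_t; rewrite /insert_at; case: leqP => [le_ts|gt_ts].
  exists (size [:: v, last 0 (rot t s) & rot t s] - t), t.
  rewrite -/(rotr t _) -[LHS](rotK t); congr rotr.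
  by rewrite -{1}(size_takel le_ts) rot_size_cat last_rot.
exists 1, 1; case: s s_gt0 {le_t gt_ts} => [|x s] // _.
by rewrite [rot 1 (x :: s)]rot1_cons last_rcons rot1_cons /= -!cats1 -catA.
Qed.

Lemma last_rot_mem j (s : seq nat) : 0 < size s -> last 0 (rot j s) \in s.
Proof.
rewrite -(mem_rot j) -(size_rot j).
by case: (rot j s) => [|z Z] // _; apply: mem_last.
Qed.

Section InsertAt.
Variables (t v : nat) (s : seq nat).
Hypotheses (s_gt0 : 0 < size s) (le_t : t <= (size s).+1).

Lemma mem_insert_at y : (y \in insert_at 0 t v s) = (y == v) || (y \in s).
Proof.
have [k [j ->]] := insert_atE_rot v s_gt0 le_t.
rewrite mem_rot !inE mem_rot; case: eqP => [->|_] //=.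
by case: eqP => [->|_] //; rewrite last_rot_mem.
Qed.

Lemma count_insert_at w : count_mem w s + (v == w) <= count_mem w (insert_at 0 t v s).
Proof.
have [k [j ->]] := insert_atE_rot v s_gt0 le_t.
by rewrite count_rot /= count_rot; lia.
Qed.

Variable P : pred nat.
Hypothesis Pv : P v.

Lemma balanced_on_insert_at : balanced_on P s -> balanced_on P (insert_at 0 t v s).
Proof.
have [k [j ->]] := insert_atE_rot v s_gt0 le_t.
rewrite balanced_on_rot -(balanced_on_rot P j).
have : 0 < size (rot j s) by rewrite size_rot.
by case: (rot j s) => [|z Z] // _; exact: balanced_on_splice Pv.
Qed.

Lemma weak_bleaf_insert_at w : ~~ P w ->
  weak_bleaf (insert_at 0 t v s) w -> weak_bleaf s w.
Proof.
have [k [j ->]] := insert_atE_rot v s_gt0 le_t.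
rewrite weak_bleaf_rot -(weak_bleaf_rot j s).
have : 0 < size (rot j s) by rewrite size_rot.
by case: (rot j s) => [|z Z] // _; exact: weak_bleaf_splice Pv.
Qed.
End InsertAt.

Lemma insert_remove_inner s t : 2 < size s -> t.+1 < size s ->
  nth 0 s ((t + size s - 1) %% size s) = nth 0 s t.+1 ->
  insert_at 0 t (nth 0 s t) (take t s ++ drop t.+2 s) = s.
Proof.
set N := size s => s_gt2 lt_t1 pred_eq.
have lt_t : t < N by lia.
have size_X : size (take t s ++ drop t.+2 s) = N - 2.
  by rewrite size_cat size_takel ?size_drop; lia.
rewrite /insert_at size_X ifT; last by lia.
rewrite take_cat drop_cat size_takel ?ltnn ?subnn ?take0 ?drop0 ?cats0 1?ltnW //.
rewrite -[in RHS](cat_take_drop t s) (drop_nth 0 lt_t) (drop_nth 0 lt_t1).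
congr (_ ++ _); congr (_ :: _ :: _); rewrite -pred_eq.
case: t lt_t lt_t1 {pred_eq size_X} => [|t] lt_t lt_t1.
  rewrite take0 !add0n !subn1 !modn_small ?nth_drop; try lia.
  by congr nth; lia.
have -> : t.+1 + (N - 2) - 1 = t + (N - 2) by lia.
have -> : t.+1 + N - 1 = t + N by lia.
by rewrite !modnDr !modn_small ?nth_cat ?size_takel ?ltnSn ?nth_take //; lia.
Qed.

Lemma insert_remove_last s : 2 < size s -> nth 0 s (size s - 2) = nth 0 s 0 ->
  insert_at 0 (size s).-1 (nth 0 s (size s).-1) (take (size s - 2) s) = s.
Proof.
set N := size s => s_gt2 pred_eq.
rewrite /insert_at size_takel ?ifF; try lia.
rewrite nth_take; last lia.
rewrite -[in RHS](cat_take_drop (N - 2) s); congr (_ ++ _).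
rewrite (drop_nth 0) ?(drop_nth 0 (n := (N - 2).+1)) ?drop_oversize -?pred_eq; try lia.
by have -> : (N - 2).+1 = N.-1 by lia.
Qed.

Lemma insert_remove_at s v : is_bleaf s v ->
  insert_at 0 (index v s) v (remove_at (index v s) s) = s.
Proof.
case/and3P=> s_gt2 /eqP/count_mem1 v_in /eqP.
have lt_t : index v s < size s by rewrite index_mem.
have nth_t : nth 0 s (index v s) = v by rewrite nth_index.
move: lt_t nth_t; set t := index v s; set N := size s => lt_t nth_t nbr_eq.
rewrite -nth_t /remove_at.
case: (ltnP t.+1 N) => [lt_t1|ge_t1].
  by apply: insert_remove_inner; rewrite // nbr_eq modn_small ?addn1.
have def_t : t = N.-1 by lia.
rewrite def_t; apply: insert_remove_last => //.
move: nbr_eq; rewrite def_t.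
have -> : N.-1 + N - 1 = N - 2 + N by lia.
have -> : N.-1 + 1 = N by lia.
by rewrite modnDr modnn modn_small //; lia.
Qed.

Lemma balanced_on_nth (P : pred nat) s t : balanced_on P s -> t < size s ->
  P (nth 0 s t) -> ~~ P (nth 0 s ((t + size s - 1) %% size s)) ->
  ~~ P (nth 0 s ((t + 1) %% size s)) ->
  nth 0 s ((t + size s - 1) %% size s) = nth 0 s ((t + 1) %% size s).
Proof.
move=> bal lt_t; have x_in : nth (0, (0, 0)) (windows s) t \in windows s.
  by rewrite mem_nth ?size_windows.
by have := bal _ x_in; rewrite nth_windows.
Qed.

Section Visible.
Variable P : pred nat.

(* [map (visible P) G = map (visible P) H] says that [G] and [H] carry the
   same [P]-vertices at the same positions. *)
Definition visible (x : nat) : option nat := if P x then Some x else None.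

Lemma visible_inj x y : visible x = visible y -> P x = P y /\ (P x -> x = y).
Proof. by rewrite /visible; case: (P x); case: (P y) => // -[->]. Qed.

Lemma visible_eqE w x : P w -> (visible x == Some w) = (x == w).
Proof.
rewrite /visible => Pw; case: ifP => Px //.
by apply/esym/negbTE; apply: contraFneq Px => ->.
Qed.

Lemma eq_visible_nbrs a c a' c' : visible a = visible a' -> visible c = visible c' ->
  (~~ P a -> ~~ P c -> a = c) -> (~~ P a' -> ~~ P c' -> a' = c') ->
  (a == c) = (a' == c').
Proof.
move=> /visible_inj [Pa_eq a_eq] /visible_inj [Pc_eq c_eq] bal bal'.
have neq_P x y : P x != P y -> (x == y) = false by apply: contraNF => /eqP ->.
have [PaPc|nPaPc] := eqVneq (P a) (P c); last first.
  by rewrite (neq_P a c) // (neq_P a' c') // -Pa_eq -Pc_eq.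
case Pa: (P a) in PaPc.
  by rewrite a_eq // c_eq // -PaPc.
have nPa : ~~ P a by rewrite Pa.
have nPc : ~~ P c by rewrite -PaPc.
by rewrite (bal nPa nPc) (bal' _ _) ?eqxx // -?Pa_eq -?Pc_eq.
Qed.

Variables G H : seq nat.
Hypothesis eq_vis : map visible G = map visible H.

Lemma size_visible_eq : size G = size H.
Proof. by rewrite -(size_map visible G) eq_vis size_map. Qed.

Lemma count_visible_eq w : P w -> count_mem w G = count_mem w H.
Proof.
move=> Pw; have countE s : count_mem w s = count (pred1 (Some w)) (map visible s).
  by rewrite count_map; apply: eq_count => x /=; rewrite visible_eqE.
by rewrite !countE eq_vis.
Qed.

Lemma index_visible_eq w : P w -> index w G = index w H.
Proof.
move=> Pw; have indexE s : index w s = find (pred1 (Some w)) (map visible s).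
  by rewrite find_map /index; apply: eq_find => x /=; rewrite visible_eqE.
by rewrite !indexE eq_vis.
Qed.

Lemma nth_visible_eq q : visible (nth 0 G q) = visible (nth 0 H q).
Proof. by rewrite -!(nth_map_dflt 0 visible) eq_vis. Qed.

Lemma mem_black_visible x : P x -> x \in black G -> x \in black H.
Proof.
move=> Px /imfsetP [t /=]; rewrite !inE mem_iota /= => /andP [lt_t even_t] def_x.
rewrite def_x in Px *; have [_ -> //] := visible_inj (nth_visible_eq t).
apply/imfsetP; exists t => //=.
by rewrite !inE mem_iota /= -size_visible_eq lt_t.
Qed.

Lemma bleaf_visible_eq w : P w -> balanced_on P G -> balanced_on P H ->
  is_bleaf G w = is_bleaf H w.
Proof.
move=> Pw balG balH.
rewrite /is_bleaf -size_visible_eq (count_visible_eq Pw) (index_visible_eq Pw).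
case cnt1: (count_mem w H == 1); rewrite ?andbF //=; congr (_ && _).
have w_in : w \in H by apply: count_mem1; apply/eqP.
have lt_t : index w H < size H by rewrite index_mem.
have nth_t : nth 0 H (index w H) = w by rewrite nth_index.
have w_inG : w \in G by apply: count_mem1; rewrite (count_visible_eq Pw); apply/eqP.
have nth_t' : nth 0 G (index w H) = w by rewrite -(index_visible_eq Pw) nth_index.
rewrite size_visible_eq; apply: eq_visible_nbrs; rewrite ?nth_visible_eq //.
- rewrite -size_visible_eq; apply: (balanced_on_nth balG); rewrite ?nth_t' //.
  by rewrite size_visible_eq.
- by apply: (balanced_on_nth balH); rewrite ?nth_t.
Qed.
End Visible.

Lemma mem_foldr_minn x (l : seq nat) : foldr minn x l \in x :: l.
Proof.
elim: l => [|y l IH] /=; first by rewrite mem_seq1.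
rewrite /minn; case: ifP => _; first by rewrite !inE eqxx orbT.
by move: IH; rewrite !inE => /orP [->|->]; rewrite ?orbT.
Qed.

Lemma foldr_minn_le x (l : seq nat) y : y \in x :: l -> foldr minn x l <= y.
Proof.
elim: l => [|z l IH] /=; first by rewrite mem_seq1 => /eqP ->.
rewrite !inE geq_min => /or3P [y_x|/eqP ->|y_l]; rewrite ?leqnn ?orbT //.
all: by rewrite IH ?orbT // inE ?y_x ?y_l ?orbT.
Qed.

Lemma min_bleafP s m : min_bleaf s = Some m ->
  [/\ m \in s, is_bleaf s m & forall w, w \in s -> is_bleaf s w -> m <= w].
Proof.
rewrite /min_bleaf; case def_l: [seq v <- s | is_bleaf s v] => [|x l] // [<-].
have := mem_foldr_minn x l; rewrite -def_l mem_filter => /andP [-> ->].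
by split=> // w w_in w_leaf; apply: foldr_minn_le; rewrite -def_l mem_filter w_leaf.
Qed.

Lemma min_bleaf_None s : ~~ has_bleaf s -> min_bleaf s = None.
Proof. by rewrite /has_bleaf /min_bleaf has_filter; case: filter. Qed.

Lemma min_bleaf_Some s m : m \in s -> is_bleaf s m ->
  (forall w, w \in s -> is_bleaf s w -> m <= w) -> min_bleaf s = Some m.
Proof.
move=> m_in m_leaf m_min.
have m_in_f : m \in [seq v <- s | is_bleaf s v] by rewrite mem_filter m_leaf.
case def_m': (min_bleaf s) => [m'|].
  have [m'_in m'_leaf m'_min] := min_bleafP def_m'.
  by congr Some; apply/eqP; rewrite eqn_leq m_min ?m'_min.
by move: def_m' m_in_f; rewrite /min_bleaf; case: filter.
Qed.

Lemma mem_remove_at t s x : x \in remove_at t s -> x \in s.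
Proof.
rewrite /remove_at; case: ifP => _; last exact: mem_take.
by rewrite mem_cat => /orP [/mem_take|/mem_drop].
Qed.

Lemma mem_seed_rec k s x : x \in seed_rec k s -> x \in s.
Proof.
elim: k s => [|k IH] s //=.
by case: (min_bleaf s) => [v|] // /IH /mem_remove_at.
Qed.

Lemma size_remove_at t s : t < size s -> 1 < size s ->
  size (remove_at t s) = size s - 2.
Proof.
rewrite /remove_at; case: ifP => lt_t1 lt_t s_gt1; last by rewrite size_takel ?leq_subr.
by rewrite size_cat size_takel 1?ltnW // size_drop; lia.
Qed.

Lemma seed_rec_leafless k s : ~~ has_bleaf s -> seed_rec k s = s.
Proof. by case: k => //= k /min_bleaf_None ->. Qed.

(* Replays the removals of [seed_rec k s] backwards, starting from [T0]
   instead of the seed. *)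
Fixpoint reseed (T0 : seq nat) (k : nat) (s : seq nat) : seq nat :=
  match k with
  | 0 => T0
  | k'.+1 => match min_bleaf s with
             | None => T0
             | Some v => insert_at 0 (index v s) v (reseed T0 k' (remove_at (index v s) s))
             end
  end.

Lemma reseed_leafless T0 k s : ~~ has_bleaf s -> reseed T0 k s = T0.
Proof. by case: k => //= k /min_bleaf_None ->. Qed.

Section Peel.
Variables (P : pred nat) (G0 : seq nat).

Lemma peel_min_bleaf k (G : seq nat) (v : nat) (t := index v G) (G' := remove_at t G) :
  seed_rec k.+1 G = G0 -> all (fun x => (x \in G0) || P x) G -> min_bleaf G = Some v ->
  [/\ G = insert_at 0 t v G', 0 < size G' /\ t <= (size G').+1, P v,
      seed_rec k G' = G0 & all (fun x => (x \in G0) || P x) G'].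
Proof.
move=> /= + allG min_v; rewrite min_v -/t -/G' => seed_G'.
have [v_in v_leaf _] := min_bleafP min_v.
have /bleafP [s_gt2 [cnt1 _]] := v_leaf.
have lt_t : t < size G by rewrite index_mem.
have size_G' : size G' = size G - 2 by rewrite size_remove_at //; lia.
have def_G : G = insert_at 0 t v G' by rewrite insert_remove_at.
have G'_gt0 : 0 < size G' by lia.
have le_t : t <= (size G').+1 by lia.
have v_G' : v \notin G'.
  apply/negP; rewrite -has_pred1 has_count => cnt_G'.
  by have := count_insert_at v G'_gt0 le_t v; rewrite -def_G cnt1 eqxx; lia.
split=> //.
- have /orP [v_G0|//] := allP allG v v_in.
  by rewrite -seed_G' in v_G0; rewrite (mem_seed_rec v_G0) in v_G'.
- by apply/allP=> x /mem_remove_at; apply: (allP allG).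
Qed.

Hypothesis G0_notP : all (predC P) G0.

Lemma balanced_on_seed k G : seed_rec k G = G0 -> all (fun x => (x \in G0) || P x) G ->
  balanced_on P G.
Proof.
elim: k G => [|k IH] G seed_G allG.
  by move: seed_G => /= ->; apply: balanced_on_notP.
case min_v: (min_bleaf G) => [v|]; last first.
  by apply: balanced_on_notP; move: seed_G; rewrite /= min_v => ->.
have [def_G [G'_gt0 le_t] Pv seed_G' allG'] := peel_min_bleaf seed_G allG min_v.
by rewrite def_G; apply: balanced_on_insert_at => //; apply: IH.
Qed.
End Peel.

Lemma map_visible_notP (P : pred nat) s : all (predC P) s ->
  map (visible P) s = nseq (size s) None.
Proof. by elim: s => //= x s IH /andP [/negbTE notPx /IH ->]; rewrite /visible notPx. Qed.

Section Reseed.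
Variables (P : pred nat) (G0 G0b : seq nat).
Hypotheses (G0_notP : all (predC P) G0) (G0b_notP : all (predC P) G0b).
Hypotheses (size_G0 : size G0 = size G0b) (G0b_leafless : ~~ has_bleaf G0b).
Hypothesis G0b_leaf_gt : forall w, weak_bleaf G0b w -> forall x, P x -> x < w.

Lemma min_bleaf_visible G H v :
  map (visible P) G = map (visible P) H -> balanced_on P G -> balanced_on P H ->
  (forall w, ~~ P w -> weak_bleaf H w -> weak_bleaf G0b w) ->
  P v -> min_bleaf G = Some v -> min_bleaf H = Some v.
Proof.
move=> vis_G balG balH leaf_H Pv /min_bleafP [_ v_leaf v_min].
have leafE w : P w -> is_bleaf G w = is_bleaf H w by move/bleaf_visible_eq; apply.
apply: min_bleaf_Some; rewrite -?leafE //.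
  by case/and3P: v_leaf => _ /eqP; rewrite (count_visible_eq vis_G Pv) => /count_mem1.
move=> w _ w_leaf; have [Pw|notPw] := boolP (P w).
  rewrite -leafE // in w_leaf; apply: v_min (w_leaf).
  by case/and3P: w_leaf => _ /eqP /count_mem1.
by case/bleafP: w_leaf => _ /(leaf_H w notPw) /G0b_leaf_gt/(_ v Pv)/ltnW.
Qed.

Lemma reseedP k G (H := reseed G0b k G) :
  seed_rec k G = G0 -> all (fun x => (x \in G0) || P x) G ->
  [/\ map (visible P) G = map (visible P) H,
      forall w, ~~ P w -> weak_bleaf H w -> weak_bleaf G0b w,
      all (fun x => (x \in G0b) || P x) H, seed_rec k H = G0b & reseed G0 k H = G].
Proof.
have seed_case k' : [/\ map (visible P) G0 = map (visible P) G0b,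
    forall w, ~~ P w -> weak_bleaf G0b w -> weak_bleaf G0b w,
    all (fun x => (x \in G0b) || P x) G0b, seed_rec k' G0b = G0b & reseed G0 k' G0b = G0].
  split=> //; first by rewrite !map_visible_notP // size_G0.
  - by apply/allP=> x ->.
  - exact: seed_rec_leafless.
  - exact: reseed_leafless.
rewrite {}/H; elim: k G => [|k IH] G seed_G allG.
  by move: seed_G => /= ->; apply: (seed_case 0).
case min_v: (min_bleaf G) => [v|]; last first.
  by move: seed_G; rewrite /= min_v => ->; apply: (seed_case k.+1).
have [def_G [G'_gt0 le_t] Pv seed_G' allG'] := peel_min_bleaf seed_G allG min_v.
have [vis_G' leaf_H' allH' seed_H' reseed_H'] := IH _ seed_G' allG'.
have -> /= : reseed G0b k.+1 G = insert_at 0 (index v G) v (reseed G0b k (remove_at (index v G) G)).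
  by rewrite /= min_v.
move: def_G le_t G'_gt0 vis_G' leaf_H' allH' seed_H' reseed_H'.
set t := index v G; set G' := remove_at t G; set H' := reseed G0b k G'.
move=> def_G le_t G'_gt0 vis_G' leaf_H' allH' seed_H' reseed_H'.
have size_H' : size H' = size G' by rewrite (size_visible_eq vis_G').
have H'_gt0 : 0 < size H' by rewrite size_H'.
have le_tH : t <= (size H').+1 by rewrite size_H'.
have vis_G : map (visible P) G = map (visible P) (insert_at 0 t v H').
  by rewrite def_G !map_insert_at vis_G'.
have leaf_H w : ~~ P w -> weak_bleaf (insert_at 0 t v H') w -> weak_bleaf G0b w.
  by move=> notPw /(weak_bleaf_insert_at H'_gt0 le_tH Pv notPw); apply: leaf_H'.
have min_vH : min_bleaf (insert_at 0 t v H') = Some v.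
  apply: (min_bleaf_visible vis_G _ _ leaf_H Pv min_v).
    exact: (balanced_on_seed G0_notP seed_G allG).
  exact: (balanced_on_insert_at H'_gt0 le_tH Pv (balanced_on_seed G0b_notP seed_H' allH')).
rewrite min_vH -(index_visible_eq vis_G Pv) remove_insert_at //.
split=> //; last by rewrite reseed_H' -def_G.
apply/allP=> x; rewrite mem_insert_at // => /predU1P [->|/(allP allH') //].
by rewrite Pv orbT.
Qed.
End Reseed.

Lemma weak_bleaf_gt (P : pred nat) l0 s : size s = 2 * l0 -> ~~ has_bleaf s ->
  (l0 = 1 -> forall a b, s = [:: a; b] -> a != b -> forall x, P x -> x < a /\ x < b) ->
  forall w, weak_bleaf s w -> forall x, P x -> x < w.
Proof.
move=> size_s leafless pair_gt w w_leaf x Px; have [cnt1 _] := w_leaf.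
case: (ltnP 2 (size s)) => [s_gt2|].
  by case/hasP: leafless; exists w; [apply: count_mem1 | apply/bleafP].
case: s size_s leafless pair_gt {w_leaf} cnt1 => [|a [|b [|]]] //=; try lia.
move=> size_ab _ pair_gt cnt1.
have l0_1 : l0 = 1 by apply/eqP; rewrite -(eqn_pmul2l (isT : 0 < 2)) -size_ab.
have neq_ab : a != b by apply: contra_eqN cnt1 => /eqP ->; case: (b == w).
have [] := pair_gt l0_1 a b erefl neq_ab x Px.
by move: cnt1; case: eqP => [->|_]; case: eqP => [->|_].
Qed.

Lemma mem_all_seqs (V : seq nat) N s :
  (s \in all_seqs V N) = (size s == N) && all (fun x => x \in V) s.
Proof.
elim: N s => [|N IH] [|x s] //=.
  by apply/negP=> /allpairsP [[a b] /= [_ _]].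
rewrite eqSS; apply/allpairsP/idP.
  by case=> -[a b] /= [a_in b_in [-> ->]]; rewrite a_in -IH b_in.
by case/andP=> size_s /andP [x_in all_s]; exists (x, s); rewrite /= IH size_s.
Qed.

Lemma mem_circuits V N s : (s \in circuits V N) = is_route V N s.
Proof.
rewrite mem_filter; apply/andP/idP => [[] //|route_s]; split=> //.
by case/and3P: route_s => size_s all_s _; rewrite mem_all_seqs size_s.
Qed.

Lemma uniq_circuits V N : uniq (circuits V N).
Proof.
apply: filter_uniq; elim: N => //= N IH.
by apply: allpairs_uniq => // [|[a b] [c d] _ _ /= [-> ->]] //; apply: fset_uniq.
Qed.

Local Open Scope fset_scope.

Lemma route_notin (V V' : {fset nat}) N s : [disjoint V' & V] -> is_route V N s ->
  all (fun x => x \notin V') s.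
Proof.
move=> /fdisjointP disj /and3P [_ /allP sub_V _]; apply/allP=> x /sub_V x_V /=.
by apply: contraL x_V => /disj.
Qed.

Lemma leq_size_filter_cancel (T1 T2 : eqType) (s1 : seq T1) (s2 : seq T2)
    (a1 : pred T1) (a2 : pred T2) (f : T1 -> T2) (g : T2 -> T1) :
  uniq s1 -> {in s1, forall x, a1 x -> [/\ f x \in s2, a2 (f x) & g (f x) = x]} ->
  size (filter a1 s1) <= size (filter a2 s2).
Proof.
move=> uniq_s1 f_to; rewrite -(size_map f); apply: uniq_leq_size.
  rewrite map_inj_in_uniq ?filter_uniq // => x y.
  rewrite !mem_filter => /andP [a1x x_in] /andP [a1y y_in] eq_fxy.
  by have [_ _ <-] := f_to x x_in a1x; have [_ _ <-] := f_to y y_in a1y; rewrite eq_fxy.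
move=> y /mapP [x]; rewrite mem_filter => /andP [a1x x_in] ->.
by have [fx_in a2fx _] := f_to x x_in a1x; rewrite mem_filter a2fx.
Qed.

Lemma black_visible (V' : {fset nat}) G H :
  map (visible (mem V')) G = map (visible (mem V')) H -> black G `&` V' = black H `&` V'.
Proof.
move=> vis_G; apply/fsetP=> x; rewrite !in_fsetI.
case V'x: (x \in V'); rewrite ?andbF ?andbT //.
by apply/idP/idP; apply: mem_black_visible V'x; rewrite ?vis_G.
Qed.

Lemma route_visible (V V0 V' : {fset nat}) N M G H G0 :
  map (visible (mem V')) G = map (visible (mem V')) H ->
  is_route (V `|` V') N G -> is_route V0 M G0 -> {subset G0 <= H} ->
  all (fun x => (x \in G0) || (x \in V')) H -> is_route (V0 `|` V') N H.
Proof.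
move=> vis_G /and3P [/eqP size_G _ cover_G] /and3P [_ sub_G0 cover_G0] G0_H all_H.
apply/and3P; split; first by rewrite -(size_visible_eq vis_G) size_G.
  apply/allP=> x /(allP all_H) /orP [x_G0|V'x]; rewrite in_fsetU ?V'x ?orbT //.
  by rewrite (allP sub_G0).
apply/allP=> x; rewrite in_fsetU => /orP [x_V0|V'x]; first exact/G0_H/(allP cover_G0).
rewrite -has_pred1 has_count -(count_visible_eq vis_G V'x) -has_count has_pred1.
by apply: (allP cover_G); rewrite in_fsetU V'x orbT.
Qed.

Lemma leq_count_seeded l0 (V0 V0b V' : {fset nat}) G0 G0b N B :
  G0 \in circuits V0 (2 * l0) -> G0b \in circuits V0b (2 * l0) -> ~~ has_bleaf G0b ->
  [disjoint V' & V0] -> [disjoint V' & V0b] ->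
  (l0 = 1 -> forall a b, G0b = [:: a; b] -> a != b ->
     forall x, x \in V' -> x < a /\ x < b) ->
  count_seeded (V0 `|` V') N G0 V' B <= count_seeded (V0b `|` V') N G0b V' B.
Proof.
rewrite !mem_circuits => route0 route0b leafless disj0 disj0b pair_gt.
have [/eqP size0 _ cover0] := and3P route0.
have [/eqP size0b _ _] := and3P route0b.
rewrite /count_seeded.
apply: (leq_size_filter_cancel (f := reseed G0b N) (g := reseed G0 N)); first exact: uniq_circuits.
move=> G; rewrite mem_circuits => route_G /andP [/eqP seed_G /eqP black_G].
have [/eqP size_G sub_G _] := and3P route_G.
have allG : all (fun x => (x \in G0) || (x \in V')) G.
  apply/allP=> x /(allP sub_G); rewrite in_fsetU => /orP [/(allP cover0) -> //|->].
  by rewrite orbT.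
rewrite /seed size_G in seed_G.
have [vis_G _ allH seed_H reseed_H] := reseedP (route_notin disj0 route0)
  (route_notin disj0b route0b) (etrans size0 (esym size0b)) leafless
  (weak_bleaf_gt size0b leafless pair_gt) seed_G allG.
have G0b_H : {subset G0b <= reseed G0b N G} by move=> x; rewrite -{1}seed_H => /mem_seed_rec.
split=> //; first by rewrite mem_circuits (route_visible vis_G route_G route0b).
by rewrite /seed -(size_visible_eq vis_G) size_G seed_H -black_G (black_visible vis_G) !eqxx.
Qed.

Unset Implicit Arguments.

Theorem lemma5p1 (r0 r0bar l0 : nat) (V0 V0bar V' : {fset nat})
  (G0 G0bar : seq nat) :
  #|` V0| = r0 -> #|` V0bar| = r0bar ->
  G0 \in circuits V0 (2 * l0) -> ~~ has_bleaf G0 ->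
  G0bar \in circuits V0bar (2 * l0) -> ~~ has_bleaf G0bar ->
  [disjoint V' & V0] -> [disjoint V' & V0bar] ->
  (l0 = 1 -> forall a b, G0 = [:: a; b] -> a != b ->
     forall x, x \in V' -> x < a /\ x < b) ->
  (l0 = 1 -> forall a b, G0bar = [:: a; b] -> a != b ->
     forall x, x \in V' -> x < a /\ x < b) ->
  forall B : {fset nat}, B `<=` V' ->
    count_seeded (V0 `|` V') (2 * l0 + 2 * #|` V'|) G0 V' B =
    count_seeded (V0bar `|` V') (2 * l0 + 2 * #|` V'|) G0bar V' B.
Proof.
move=> _ _ G0_circ leafless0 G0bar_circ leafless0bar disj0 disj0bar pair0 pair0bar B _.
by apply/eqP; rewrite eqn_leq !(leq_count_seeded (l0 := l0)).
Qed.
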